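(* Let $\lambda=\frac{3+\sqrt{5}}{2}$, let $(f_n)_{n\geq 0}$ be the Fibonacci numbers, and for a positive integer $l$ let $\phi_l$ be the $l$-th cyclotomic polynomial. For every positive integer $n$, writing $\operatorname{res}$ for the resultant: (1) $\operatorname{res}\{(x-\lambda^n)(x-\lambda^{-n}),\phi_5\}=5^2(5f_n^4+5f_n^2+1)^2$ if $n$ is even, and $=(5^2f_n^4-15f_n^2+1)^2$ if $n$ is odd; (2) $\operatorname{res}\{(x-\lambda^n)(x-\lambda^{-n}),\phi_{10}\}=(5^2f_n^4+15f_n^2+1)^2$ if $n$ is even, and $=5^2(5f_n^4-5f_n^2+1)^2$ if $n$ is odd; (3) $\operatorname{res}\{(x-\lambda^n)(x-\lambda^{-n}),\phi_{25}\}=5^2(5f_{5n}^4+5f_{5n}^2+1)^2$ if $n$ is even, and $=(5^2f_{5n}^4-15f_{5n}^2+1)^2$ if $n$ is odd; (4) $\operatorname{res}\{(x-\lambda^n)(x-\lambda^{-n}),\phi_{50}\}=(5^2f_{5n}^4+15f_{5n}^2+1)^2$ if $n$ is even, and $=5^2(5f_{5n}^4-5f_{5n}^2+1)^2$ if $n$ is odd.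
   Context: The Fibonacci numbers are $f_0=0$, $f_1=1$, $f_{n+2}=f_{n+1}+f_n$. For polynomials $P,Q$ without common complex roots, $\operatorname{res}\{P,Q\}=\prod_{P(u)=0,\,Q(v)=0}(u-v)$ (roots counted with multiplicity). *)

From HB Require Import structures.
From mathcomp Require Import all_boot all_order all_algebra all_field.
Set Implicit Arguments. Unset Strict Implicit. Unset Printing Implicit Defensive.
Import Order.TTheory GRing.Theory Num.Theory.
Local Open Scope ring_scope.

Fixpoint fib (n : nat) : nat :=
  match n with
  | 0 => 0
  | 1 => 1
  | (m.+1 as k).+1 => (fib k + fib m)%N
  end.

(* The multiset of complex roots of p (with multiplicity), obtained from the
   complete factorisation p = lead_coef p * prod (X - z) over algC. *)
Definition rootsC (p : {poly algC}) : seq algC := sval (closed_field_poly_normal p).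

Definition resC (P Q : {poly algC}) : algC :=
  \prod_(u <- rootsC P) \prod_(v <- rootsC Q) (u - v).

Definition lam : algC := (3 + sqrtC 5) / 2.

Definition phiC (l : nat) : {poly algC} := map_poly intr ('Phi_l).

Definition Pn (n : nat) : {poly algC} :=
  ('X - (lam ^+ n)%:P) * ('X - (lam ^- n)%:P).

From HB Require Import structures.
From mathcomp Require Import all_boot all_order all_algebra all_field.
From mathcomp Require Import ring.
Set Implicit Arguments.
Unset Strict Implicit.
Unset Printing Implicit Defensive.

Import Order.TTheory GRing.Theory Num.Theory.
Local Open Scope ring_scope.

(** Since [Phi_l] is monic, the resultant is [Phi_l(c) * Phi_l(c^-1)] for
   [c = lam^n]. As [Phi_5] is palindromic, [Phi_5(c) * Phi_5(c^-1)] equals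
   [(t^2 + t - 1)^2] with [t = c + c^-1], and [Phi_10(x) = Phi_5(-x)],
   [Phi_25(x) = Phi_5(x^5)], [Phi_50(x) = Phi_5(-x^5)] reduce the other
   three resultants to the same expression at [-c], [c^5] and [-c^5].
   Finally [lam = phi^2] and [lam^-1 = psi^2] for the golden ratio [phi] and
   its conjugate [psi], so Binet's formula [sqrt 5 f_m = phi^m - psi^m] gives
   [lam^m + lam^-m = 5 f_m^2 + 2 (phi psi)^m = 5 f_m^2 + 2 (-1)^m]. *)

Lemma Cyclotomic_eq n (p : {poly int}) : (0 < n)%N ->
  (\prod_(d <- divisors n | d != n) 'Phi_d) * p = 'X^n - 1 -> 'Phi_n = p.
Proof.
move=> n_gt0; have n_divisor : n \in divisors n by rewrite -dvdn_divisors.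
rewrite -prod_Cyclotomic // (bigD1_seq n) ?divisors_uniq //=.
rewrite mulrC => /esym; apply: mulIf; apply: monic_neq0.
by apply: monic_prod => d _; apply: Cyclotomic_monic.
Qed.

Lemma Cyclotomic1 : 'Phi_1 = 'X - 1.
Proof.
apply: Cyclotomic_eq => //.
by rewrite (_ : divisors 1 = [:: 1%N]) // big_cons big_nil /= mul1r.
Qed.

Lemma Cyclotomic2 : 'Phi_2 = 'X + 1.
Proof.
apply: Cyclotomic_eq => //.
by rewrite (_ : divisors 2 = [:: 1; 2]%N) // !big_cons big_nil /= Cyclotomic1; ring.
Qed.

Lemma Cyclotomic5 : 'Phi_5 = 'X^4 + 'X^3 + 'X^2 + 'X + 1.
Proof.
apply: Cyclotomic_eq => //.
by rewrite (_ : divisors 5 = [:: 1; 5]%N) // !big_cons big_nil /= Cyclotomic1; ring.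
Qed.

Lemma Cyclotomic10 : 'Phi_10 = 'X^4 - 'X^3 + 'X^2 - 'X + 1.
Proof.
apply: Cyclotomic_eq => //.
rewrite (_ : divisors 10 = [:: 1; 2; 5; 10]%N) // !big_cons big_nil /=.
by rewrite Cyclotomic1 Cyclotomic2 Cyclotomic5; ring.
Qed.

Lemma Cyclotomic25 : 'Phi_25 = 'X^20 + 'X^15 + 'X^10 + 'X^5 + 1.
Proof.
apply: Cyclotomic_eq => //.
rewrite (_ : divisors 25 = [:: 1; 5; 25]%N) // !big_cons big_nil /=.
by rewrite Cyclotomic1 Cyclotomic5; ring.
Qed.

Lemma Cyclotomic50 : 'Phi_50 = 'X^20 - 'X^15 + 'X^10 - 'X^5 + 1.
Proof.
apply: Cyclotomic_eq => //.
rewrite (_ : divisors 50 = [:: 1; 2; 5; 10; 25; 50]%N) // !big_cons big_nil /=.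
by rewrite Cyclotomic1 Cyclotomic2 Cyclotomic5 Cyclotomic10 Cyclotomic25; ring.
Qed.

Lemma rootsC_monic (p : {poly algC}) : p \is monic ->
  p = \prod_(z <- rootsC p) ('X - z%:P).
Proof.
rewrite /rootsC; case: closed_field_poly_normal => r /= def_p /monicP p_monic.
by rewrite {1}def_p p_monic scale1r.
Qed.

Lemma rootsC_prod_XsubC (s : seq algC) :
  perm_eq (rootsC (\prod_(z <- s) ('X - z%:P))) s.
Proof. by apply: prod_XsubC_eq; rewrite -rootsC_monic ?monic_prod_XsubC. Qed.

Lemma resC_prod_XsubC (s : seq algC) (Q : {poly algC}) : Q \is monic ->
  resC (\prod_(z <- s) ('X - z%:P)) Q = \prod_(z <- s) Q.[z].
Proof.
move=> Q_monic; rewrite /resC (perm_big _ (rootsC_prod_XsubC s)).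
apply: eq_bigr => u _; rewrite [in RHS](rootsC_monic Q_monic) horner_prod.
by apply: eq_bigr => v _; rewrite hornerXsubC.
Qed.

Section Binet.

Variables (F : numFieldType) (s : F).
Hypothesis s_sqr : s ^+ 2 = 5.

Lemma golden_sqr (x : F) : x ^+ 2 = 5 -> ((1 + x) / 2) ^+ 2 = (1 + x) / 2 + 1.
Proof.
move=> x_sqr; transitivity ((1 + 2 * x + x ^+ 2) / 4); first by field.
by rewrite x_sqr; field.
Qed.

Lemma fib_Binet n : s * (fib n)%:R = ((1 + s) / 2) ^+ n - ((1 - s) / 2) ^+ n.
Proof.
set phi := (1 + s) / 2; set psi := (1 - s) / 2.
have fibonacci_step (x : F) m : x ^+ 2 = x + 1 -> x ^+ m.+2 = x ^+ m.+1 + x ^+ m.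
  by move=> x2; rewrite !exprS mulrA -expr2 x2; ring.
have phi_step := fibonacci_step phi _ (golden_sqr s_sqr).
have psi_step := fibonacci_step psi _ (golden_sqr (etrans (sqrrN s) s_sqr)).
suff: s * (fib n)%:R = phi ^+ n - psi ^+ n /\
      s * (fib n.+1)%:R = phi ^+ n.+1 - psi ^+ n.+1 by case.
elim: n => [|n [IHn IHn1]].
  by split; rewrite /= ?mulr0 ?subrr // mulr1 /phi /psi; field.
by split=> //; rewrite [fib _]/= natrD mulrDr IHn IHn1 phi_step psi_step; ring.
Qed.

Lemma Lucas_double n :
  ((3 + s) / 2) ^+ n + ((3 - s) / 2) ^+ n = 5 * (fib n)%:R ^+ 2 + 2 * (-1) ^+ n.
Proof.
have phi_sqr : ((1 + s) / 2) ^+ 2 = (3 + s) / 2 by rewrite golden_sqr //; field.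
have psi_sqr : ((1 - s) / 2) ^+ 2 = (3 - s) / 2.
  by rewrite golden_sqr ?sqrrN //; field.
have phi_psi : (1 + s) / 2 * ((1 - s) / 2) = -1.
  transitivity ((1 - s ^+ 2) / 4); first by field.
  by rewrite s_sqr; field.
rewrite -phi_sqr -psi_sqr -!exprM !(mulnC 2%N) !exprM -s_sqr -exprMn fib_Binet.
rewrite -phi_psi; move: ((1 + s) / 2) ((1 - s) / 2) => phi psi.
by rewrite exprMn; ring.
Qed.

Lemma golden_sqr_conj : (3 + s) / 2 * ((3 - s) / 2) = 1.
Proof.
transitivity ((9 - s ^+ 2) / 4); first by field.
by rewrite s_sqr; field.
Qed.

End Binet.

Lemma resC_mul_XsubC (a b : algC) (Q : {poly algC}) : Q \is monic ->
  resC (('X - a%:P) * ('X - b%:P)) Q = Q.[a] * Q.[b].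
Proof.
move=> Q_monic; have := resC_prod_XsubC [:: a; b] Q_monic.
by rewrite !big_cons !big_nil !mulr1.
Qed.

Lemma phiC_monic l : phiC l \is monic.
Proof. exact: monic_map (Cyclotomic_monic l). Qed.

Lemma horner_Cyclotomic5 (F : nzRingType) (x : F) :
  (map_poly intr 'Phi_5).[x] = x ^+ 4 + x ^+ 3 + x ^+ 2 + x + 1.
Proof.
rewrite Cyclotomic5 !(rmorphD, rmorph1, rmorphXn) /= map_polyX.
by rewrite !hornerE !hornerXn.
Qed.

Lemma Cyclotomic5_recip (F : fieldType) (x : F) : x != 0 ->
  (map_poly intr 'Phi_5).[x] * (map_poly intr 'Phi_5).[x^-1] =
  ((x + x^-1) ^+ 2 + (x + x^-1) - 1) ^+ 2.
Proof. by move=> x_neq0; rewrite !horner_Cyclotomic5; field. Qed.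

Lemma horner_phiC10 x : (phiC 10).[x] = (phiC 5).[- x].
Proof.
rewrite /phiC horner_Cyclotomic5 Cyclotomic10.
rewrite !(rmorphD, rmorphB, rmorphN, rmorph1, rmorphXn) /= map_polyX.
by rewrite !hornerE; ring.
Qed.

Lemma horner_phiC25 x : (phiC 25).[x] = (phiC 5).[x ^+ 5].
Proof.
rewrite /phiC horner_Cyclotomic5 Cyclotomic25.
by rewrite !(rmorphD, rmorph1, rmorphXn) /= map_polyX !hornerE -!exprM.
Qed.

Lemma horner_phiC50 x : (phiC 50).[x] = (phiC 5).[- x ^+ 5].
Proof.
rewrite /phiC horner_Cyclotomic5 Cyclotomic50.
rewrite !(rmorphD, rmorphB, rmorphN, rmorph1, rmorphXn) /= map_polyX.
by rewrite !hornerE; ring.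
Qed.

Lemma lam_mul_conj : lam * ((3 - sqrtC 5) / 2) = 1.
Proof. exact: golden_sqr_conj (sqrtCK 5). Qed.

Lemma lam_neq0 : lam != 0.
Proof.
by apply: contra_eq_neq lam_mul_conj => ->; rewrite mul0r eq_sym oner_eq0.
Qed.

Lemma lam_Lucas m : lam ^+ m + lam ^- m = 5 * (fib m)%:R ^+ 2 + 2 * (-1) ^+ m.
Proof.
rewrite -exprVn (mulr1_eq lam_mul_conj); exact: Lucas_double (sqrtCK 5) m.
Qed.

Theorem mainTheorem6 (n : nat) : (0 < n)%N ->
  let f : algC := (fib n)%:R in
  let g : algC := (fib (5 * n))%:R in
  [/\ resC (Pn n) (phiC 5) =
        (if ~~ odd n then 5 ^+ 2 * (5 * f ^+ 4 + 5 * f ^+ 2 + 1) ^+ 2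
         else (5 ^+ 2 * f ^+ 4 - 15 * f ^+ 2 + 1) ^+ 2),
      resC (Pn n) (phiC 10) =
        (if ~~ odd n then (5 ^+ 2 * f ^+ 4 + 15 * f ^+ 2 + 1) ^+ 2
         else 5 ^+ 2 * (5 * f ^+ 4 - 5 * f ^+ 2 + 1) ^+ 2),
      resC (Pn n) (phiC 25) =
        (if ~~ odd n then 5 ^+ 2 * (5 * g ^+ 4 + 5 * g ^+ 2 + 1) ^+ 2
         else (5 ^+ 2 * g ^+ 4 - 15 * g ^+ 2 + 1) ^+ 2)
    & resC (Pn n) (phiC 50) =
        (if ~~ odd n then (5 ^+ 2 * g ^+ 4 + 15 * g ^+ 2 + 1) ^+ 2
         else 5 ^+ 2 * (5 * g ^+ 4 - 5 * g ^+ 2 + 1) ^+ 2)].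
Proof.
move=> _ f g; rewrite /Pn !resC_mul_XsubC ?phiC_monic //.
set c := lam ^+ n; have c_neq0 : c != 0 by rewrite expf_neq0 ?lam_neq0.
have c5_neq0 : c ^+ 5 != 0 by rewrite expf_neq0.
have trace_c : c + c^-1 = 5 * f ^+ 2 + 2 * (-1) ^+ n by rewrite lam_Lucas.
have trace_c5 : c ^+ 5 + (c ^+ 5)^-1 = 5 * g ^+ 2 + 2 * (-1) ^+ n.
  by rewrite -exprM mulnC lam_Lucas -signr_odd oddM /= signr_odd.
rewrite !horner_phiC10 !horner_phiC25 !horner_phiC50 exprVn -!invrN.
rewrite !Cyclotomic5_recip ?oppr_eq0 // !invrN -!opprD.
rewrite trace_c trace_c5 -signr_odd.
by split; case: (odd n) => /=; ring.
Qed.
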